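(* Let $p$ be a prime and $F$ a field of characteristic $p$. Let $L\in F[x]$ be a $p$-polynomial of $p$-degree $n$ with no repeated roots, let $E$ be a splitting field of $L$ over $F$, and let $V_L\subseteq E$ be the $\mathbb{F}_p$-space of roots of $L$. Let $P(x)\in F[x]$ be the polynomial with $L(x)/x=P(x^{p-1})$, and let $L_P\in F[x]$ be a $p$-linearized polynomial of smallest degree that is divisible by $P$. Let $\alpha_1,\dots,\alpha_n$ be an $\mathbb{F}_p$-basis of $V_L$. Then every element $\alpha_1^{k_1}\alpha_2^{k_2}\cdots\alpha_n^{k_n}$, where $k_1,\dots,k_n$ are nonnegative integers with $k_1+\cdots+k_n=p-1$, is a root of $L_P$.
   Context: A $p$-polynomial (p-linearized polynomial) of $p$-degree $n$ is $\sum_{i=0}^n a_ix^{p^i}$ with $a_n\neq0$. Since each $p^i-1$ is divisible by $p-1$, $L(x)/x$ is a polynomial in $x^{p-1}$, so $P$ is well defined. *)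

From HB Require Import structures.
From mathcomp Require Import all_boot all_order all_algebra all_field.
Set Implicit Arguments. Unset Strict Implicit. Unset Printing Implicit Defensive.
Import GRing.Theory.
Local Open Scope ring_scope.

Definition is_plinearized (R : nzRingType) (p : nat) (q : {poly R}) : Prop :=
  forall i : nat, q`_i != 0 -> exists k : nat, i = (p ^ k)%N.

Definition is_ppoly (R : nzRingType) (p n : nat) (q : {poly R}) : Prop :=
  is_plinearized p q /\ size q = (p ^ n).+1.

(* LP is a p-linearized polynomial of smallest degree that is divisible by P
   (nonzero, since otherwise "smallest degree" is meaningless). *)
Definition is_min_plin_multiple (F : fieldType) (p : nat) (P LP : {poly F}) : Prop :=
  [/\ is_plinearized p LP, LP != 0, P %| LP &
      forall q : {poly F}, is_plinearized p q -> q != 0 -> P %| q ->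
        (size LP <= size q)%N].

From HB Require Import structures.
From mathcomp Require Import all_boot all_order all_algebra all_field ring.
Set Implicit Arguments.
Unset Strict Implicit.
Unset Printing Implicit Defensive.

Import GRing.Theory.
Local Open Scope ring_scope.

(* Since P divides LP and LP(0) = 0, every root v of L gives a root v^(p-1)
   of LP; this applies to all v = c_1 alpha_1 + ... + c_n alpha_n with c in
   F_p^n.  As LP is p-linearized, x |-> LP(x) is additive, so expanding the
   power shows that sum_k multinom(p-1; k) c^k LP(alpha^k) vanishes on F_p^n.
   Having degree < p in each c_i, this polynomial in c is zero (argued one
   variable at a time with the binomial theorem), and the multinomial
   coefficients are nonzero mod p; hence LP(alpha^k) = 0. *)

Section PLinearizedHorner.

Variables (R : comNzRingType) (p : nat) (q : {poly R}).
Hypotheses (pR : p \in [pchar R]) (q_plin : is_plinearized p q).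

Lemma horner_plinD : {morph horner q : x y / x + y}.
Proof.
move=> x y; rewrite !horner_coef -big_split /=; apply: eq_bigr => i _.
have [->|/q_plin[k ->]] := eqVneq q`_i 0; first by rewrite !mul0r addr0.
rewrite -mulrDr exprDn_pchar // (eq_pnat _ (pcharf_eq pR)) pnatX pnat_id //.
exact: pcharf_prime pR.
Qed.

Lemma horner_plin_is_nmod_morphism : nmod_morphism (horner q).
Proof.
split; last exact: horner_plinD.
by apply: (@addrI _ q.[0]); rewrite -horner_plinD !addr0.
Qed.

Definition horner_plin : {additive R -> R} :=
  HB.pack_for {additive R -> R} (horner q)
    (GRing.isNmodMorphism.Build R R (horner q) horner_plin_is_nmod_morphism).

End PLinearizedHorner.

Lemma plinearized_map (R S : nzRingType) (f : {additive R -> S}) p q :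
  is_plinearized p q -> is_plinearized p (map_poly f q).
Proof.
move=> q_plin i; rewrite coef_map => fqi_neq0; apply: q_plin.
by apply: contraNneq fqi_neq0 => ->; rewrite raddf0.
Qed.

Lemma natr_inj_lt_pchar (R : nzRingType) p u v : p \in [pchar R] ->
  (u < p)%N -> (v < p)%N -> u%:R = v%:R :> R -> u = v.
Proof.
move=> pR ltup ltvp uv; wlog le_uv : u v ltup ltvp uv / (u <= v)%N.
  by move=> IH; case: (leqP u v) => [|/ltnW] ?; [|apply/esym]; apply: IH.
have : v == u %[mod p].
  by rewrite eqn_mod_dvd // (dvdn_pcharf pR) natrB // uv subrr.
by rewrite !modn_small // => /eqP.
Qed.

Lemma poly_eq0_nat_roots (R : idomainType) p (q : {poly R}) :
  p \in [pchar R] -> (size q <= p)%N ->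
  (forall t, (t < p)%N -> root q t%:R) -> q = 0.
Proof.
move=> pR le_qp q_roots.
apply: (@roots_geq_poly_eq0 _ _ [seq t%:R | t <- iota 0 p]).
- apply/allP=> x /mapP[t]; rewrite mem_iota => /andP[_ ltp] ->.
  exact: q_roots.
- rewrite map_inj_in_uniq ?iota_uniq // => u v; rewrite !mem_iota /=.
  exact: natr_inj_lt_pchar.
- by rewrite size_map size_iota.
Qed.

Lemma size_map_poly_le (R S : nzRingType) (f : {additive R -> S}) q :
  (size (map_poly f q) <= size q)%N.
Proof. by rewrite map_polyE (leq_trans (size_Poly _)) ?size_map. Qed.

Lemma raddf_horner_nat (R : nzRingType) (f : {additive R -> R}) a n :
  f a.[n%:R] = (map_poly f a).[n%:R].
Proof.
rewrite horner_coef (horner_coef_wide _ (size_map_poly_le f a)) raddf_sum.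
by apply: eq_bigr => i _; rewrite coef_map -natrX !mulr_natr raddfMn.
Qed.

Lemma prime_ndvd_fact p m : prime p -> (m < p)%N -> ~~ (p %| m`!)%N.
Proof.
move=> p_pr ltmp; rewrite fact_prod Euclid_dvd_prod // big_has.
apply/hasPn => i; rewrite mem_index_iota => /andP[i_gt0 leim] /=.
by rewrite gtnNdvd // (leq_ltn_trans _ ltmp) // -ltnS.
Qed.

Lemma natr_bin_neq0_pchar (R : nzRingType) p m j : p \in [pchar R] ->
  (m < p)%N -> (j <= m)%N -> 'C(m, j)%:R != 0 :> R.
Proof.
move=> pR ltmp lejm; rewrite -(dvdn_pcharf pR).
have bin_dvd_fact : ('C(m, j) %| m`!)%N by rewrite -(bin_fact lejm) dvdn_mulr.
apply/negP => /dvdn_trans/(_ bin_dvd_fact).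
exact/negP/prime_ndvd_fact/ltmp/pcharf_prime/pR.
Qed.

Section AdditiveCharP.

Variables (K : fieldType) (p : nat) (f : {additive K -> K}).
Hypothesis pK : p \in [pchar K].

Lemma raddf_coef_eq0 (a : {poly K}) : (size a <= p)%N ->
  (forall t, (t < p)%N -> f a.[t%:R] = 0) -> forall j, f a`_j = 0.
Proof.
move=> le_ap fa0 j.
rewrite -coef_map (poly_eq0_nat_roots (q := map_poly f a) pK) ?coef0 //.
  exact: leq_trans (size_map_poly_le f a) le_ap.
by move=> t ltp; rewrite /root -raddf_horner_nat fa0.
Qed.

Lemma raddf_binomial_eq0 (g b r : K) m : (m < p)%N ->
  (forall t, f (g * (r + t%:R * b) ^+ m) = 0) ->
  forall j, (j <= m)%N -> f (g * b ^+ j * r ^+ (m - j)) = 0.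
Proof.
move=> ltmp fgm0 j lejm.
pose a := \poly_(i < m.+1) (g * b ^+ i * r ^+ (m - i) *+ 'C(m, i)).
have a_nat t : a.[t%:R] = g * (r + t%:R * b) ^+ m.
  rewrite horner_poly exprDn mulr_sumr; apply: eq_bigr => i _.
  rewrite exprMn; move: (b ^+ i) (r ^+ (m - i)) (t%:R ^+ i) => bi rmi ti; ring.
have fa_j : f a`_j = 0.
  apply: raddf_coef_eq0 => [|t _]; first exact: leq_trans (size_poly _ _) ltmp.
  by rewrite a_nat fgm0.
move: fa_j; rewrite coef_poly ltnS lejm raddfMn -mulr_natr => /eqP.
by rewrite mulf_eq0 (negPf (natr_bin_neq0_pchar pK ltmp lejm)) orbF => /eqP.
Qed.

Lemma raddf_monomial_eq0 n (b : 'I_n -> K) g m : (m < p)%N ->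
  (forall c : 'I_n -> nat, f (g * (\sum_i (c i)%:R * b i) ^+ m) = 0) ->
  forall k : 'I_n -> nat, (\sum_i k i)%N = m -> f (g * \prod_i b i ^+ k i) = 0.
Proof.
elim: n => [|n IH] in b g m *; move=> ltmp fgm0 k.
  by rewrite big_ord0 => m0; have := fgm0 (fun _ => 0%N); rewrite -m0 !big_ord0.
rewrite big_ord_recl big_ord_recl mulrA => sum_k.
have le_k0m : (k ord0 <= m)%N by rewrite -sum_k leq_addr.
have sum_k' : (\sum_i k (lift ord0 i))%N = (m - k ord0)%N by rewrite -sum_k addKn.
apply: IH (leq_ltn_trans (leq_subr (k ord0) m) ltmp) _ _ sum_k'.
move=> c; apply: raddf_binomial_eq0 le_k0m => // t.
have := fgm0 (fun i => if unlift ord0 i is Some i' then c i' else t).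
rewrite big_ord_recl unlift_none addrC.
by under eq_bigr => i _ do rewrite liftK.
Qed.

End AdditiveCharP.

Lemma root_comp_Xn_dvdp (K : idomainType) (P Q : {poly K}) d v :
  (0 < d)%N -> P %| Q -> root Q 0 ->
  root ('X * (P \Po 'X^d)) v -> root Q (v ^+ d).
Proof.
move=> d_gt0 P_dvd_Q Q0.
have [-> _|v_neq0] := eqVneq v 0; first by rewrite expr0n gtn_eqF.
rewrite /root hornerM hornerX horner_comp hornerXn mulf_eq0 (negPf v_neq0) /=.
exact: root_dvdp.
Qed.

Theorem lemma5p1 (p : nat) (F : fieldType) (E : fieldExtType F)
  (n : nat) (L P LP : {poly F}) (alpha : 'I_n -> E) :
  prime p -> p \in [pchar F] ->
  is_ppoly p n L ->
  separable_poly L ->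
  splittingFieldFor 1%VS (map_poly (in_alg E) L) fullv ->
  L = 'X * (P \Po 'X^(p.-1)) ->
  is_min_plin_multiple p P LP ->
  (* alpha is an F_p-basis of the F_p-space V_L of roots of L in E *)
  (forall i, root (map_poly (in_alg E) L) (alpha i)) ->
  (forall c : 'I_n -> nat, (forall i, (c i < p)%N) ->
     \sum_i (c i)%:R * alpha i = 0 -> forall i, c i = 0%N) ->
  (forall x : E, root (map_poly (in_alg E) L) x ->
     exists2 c : 'I_n -> nat, (forall i, (c i < p)%N) & x = \sum_i (c i)%:R * alpha i) ->
  forall k : 'I_n -> nat, (\sum_i k i)%N = p.-1 ->
    root (map_poly (in_alg E) LP) (\prod_i alpha i ^+ k i).
Proof.
move=> p_pr pF [L_plin _] _ _ L_def [LP_plin _ P_dvd_LP _] alpha_root _ _.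
move=> k sum_k.
have pE : p \in [pchar E] by rewrite (pchar_lalg E).
have p1_gt0 : (0 < p.-1)%N by rewrite -subn1 subn_gt0 prime_gt1.
have ltp1p : (p.-1 < p)%N by rewrite prednK ?prime_gt0.
pose LE := horner_plin pE (plinearized_map (f := in_alg E) L_plin).
pose LPE := horner_plin pE (plinearized_map (f := in_alg E) LP_plin).
have span_root c : root (map_poly (in_alg E) L) (\sum_i (c i)%:R * alpha i).
  apply/eqP; rewrite -[_.[_]]/(LE _) raddf_sum big1 // => i _.
  by rewrite mulr_natl raddfMn /= (eqP (alpha_root i)) mul0rn.
have LE_def :
    map_poly (in_alg E) L = 'X * (map_poly (in_alg E) P \Po 'X^(p.-1)).
  by rewrite L_def rmorphM /= map_polyX map_comp_poly map_polyXn.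
have LPE_pow_eq0 c : LPE (1 * (\sum_i (c i)%:R * alpha i) ^+ p.-1) = 0.
  apply/eqP; rewrite mul1r.
  apply: (root_comp_Xn_dvdp (P := map_poly (in_alg E) P) p1_gt0).
  - by rewrite dvdp_map.
  - by apply/eqP; rewrite -[_.[_]]/(LPE _) raddf0.
  - by rewrite -LE_def.
by have := raddf_monomial_eq0 pE ltp1p LPE_pow_eq0 sum_k; rewrite mul1r => /eqP.
Qed.
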